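(* Let $\mathcal{H}$ be a real Hilbert space, $\lambda>0$, and $F:\mathcal{H}\to\mathbb{R}\cup\{+\infty\}$ convex, proper and lower semicontinuous with $\arg\min F\neq\emptyset$, and let $F_\lambda$ be its Moreau envelope. Then: (1) if $F$ satisfies the nonsmooth Polyak–Łojasiewicz condition (ns-PL) with parameter $\mu>0$, then $F_\lambda$ satisfies the Polyak–Łojasiewicz condition (PL) with parameter $\frac{\mu}{\lambda\mu+1}$; (2) if $F_\lambda$ satisfies (PL) with parameter $\mu>0$, then $F$ satisfies (ns-PL) with parameter $\frac{\mu}{4}$.
   Context: Moreau envelope: $F_\lambda(x)=\min_{y\in\mathcal{H}}\{F(y)+\frac{1}{2\lambda}\|y-x\|^2\}$; proximal operator $\mathrm{prox}_{\lambda F}(x)=\arg\min_{y}\{F(y)+\frac{1}{2\lambda}\|y-x\|^2\}$. $F_\lambda$ is convex, differentiable with $\frac1\lambda$-Lipschitz gradient, $\min F_\lambda=\min F=:F_*$ and $\arg\min F_\lambda=\arg\min F$. (PL) with parameter $\mu$ for a differentiable $G$ with $\arg\min G\ne\emptyset$: $G(x)-\min G\le\frac1{2\mu}\|\nabla G(x)\|^2$ for all $x$. (ns-PL) with parameter $\mu$: $F(x)-F_*\le \frac{1}{2\mu}\,\mathrm{dist}(0,\partial F(x))^2$ for all $x\in\mathcal{H}$, where $\partial F$ is the convex subdifferential and $\mathrm{dist}(0,\emptyset)=+\infty$. *)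

From HB Require Import structures.
From mathcomp Require Import all_boot all_order all_algebra.
From mathcomp Require Import all_classical all_reals all_analysis.
Set Implicit Arguments. Unset Strict Implicit. Unset Printing Implicit Defensive.
Import Order.TTheory GRing.Theory Num.Theory.
Import numFieldNormedType.Exports.
Local Open Scope classical_set_scope.
Local Open Scope ring_scope.

(* A real Hilbert space is modelled as a complete normed module H over the
   reals R together with an inner product ip inducing its norm. *)
Record is_inner_product (R : realType) (H : completeNormedModType R)
    (ip : H -> H -> R) : Prop := {
  ip_sym : forall x y, ip x y = ip y x;
  ip_linear : forall (a : R) (x y z : H), ip (a *: x + y) z = a * ip x z + ip y z;
  ip_norm : forall x, ip x x = `|x| ^+ 2
}.

Local Open Scope ereal_scope.

Definition proper_fun (R : realType) (H : completeNormedModType R)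
    (F : H -> \bar R) : Prop :=
  (forall x, -oo < F x) /\ (exists x, F x < +oo).

Definition convex_efun (R : realType) (H : completeNormedModType R)
    (F : H -> \bar R) : Prop :=
  forall (x y : H) (t : R), (0 <= t <= 1)%R ->
    F (t *: x + (1 - t) *: y)%R <= t%:E * F x + (1 - t)%:E * F y.

Definition has_minimizer (R : realType) (H : completeNormedModType R)
    (F : H -> \bar R) : Prop :=
  exists xs : H, forall y, F xs <= F y.

Definition einf_fun (R : realType) (H : completeNormedModType R)
    (F : H -> \bar R) : \bar R := ereal_inf (range F).

(* Moreau envelope F_lambda(x) = min_y { F y + 1/(2 lambda) |y - x|^2 }
   (real valued for proper lsc convex F) *)
Definition moreau (R : realType) (H : completeNormedModType R)
    (F : H -> \bar R) (lambda : R) (x : H) : R :=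
  fine (ereal_inf [set F y + ((2 * lambda)^-1 * `|(y - x)%R| ^+ 2)%:E | y in [set: H]]).

(* convex subdifferential; empty outside dom F *)
Definition subdiff (R : realType) (H : completeNormedModType R)
    (ip : H -> H -> R) (F : H -> \bar R) (x : H) : set H :=
  [set g | F x < +oo /\ forall y, F x + (ip g (y - x)%R)%:E <= F y].

(* dist(0, A) with dist(0, emptyset) = +oo *)
Definition dist0 (R : realType) (H : completeNormedModType R) (A : set H) : \bar R :=
  ereal_inf [set (`|g|)%:E | g in A].

Definition ns_PL (R : realType) (H : completeNormedModType R)
    (ip : H -> H -> R) (F : H -> \bar R) (mu : R) : Prop :=
  forall x, F x - einf_fun F <=
    ((2 * mu)^-1)%:E * (dist0 (subdiff ip F x) * dist0 (subdiff ip F x)).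

Local Close Scope ereal_scope.

Definition is_gradient (R : realType) (H : completeNormedModType R)
    (ip : H -> H -> R) (G : H -> R^o) (x g : H) : Prop :=
  differentiable G x /\ forall h, 'd G x h = ip g h.

Definition PL (R : realType) (H : completeNormedModType R)
    (ip : H -> H -> R) (G : H -> R^o) (mu : R) : Prop :=
  (forall x, exists g, is_gradient ip G x g) /\
  exists xs : H, (forall y, G xs <= G y) /\
    forall x g, is_gradient ip G x g -> G x - G xs <= (2 * mu)^-1 * `|g| ^+ 2.

From HB Require Import structures.
From mathcomp Require Import all_boot all_order all_algebra.
From mathcomp Require Import all_classical all_reals all_analysis.
From mathcomp Require Import ring lra.
Import Order.TTheory GRing.Theory Num.Theory.
Import numFieldNormedType.Exports.
Set Implicit Arguments. Unset Strict Implicit.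
Local Open Scope classical_set_scope.
Local Open Scope ring_scope.

(* Write c = 1/(2λ) and Φ_x(y) = F y + c |y - x|², so that F_λ x = inf_y Φ_x(y).
   Everything rests on one identity linking subgradients of F to gradients
   of F_λ (lemma [envelope_at_subgradient]):
     if g ∈ ∂F(p), then F_λ(p + λg) = F p + λ/2 |g|² and ∇F_λ(p + λg) = g;
   it follows by squeezing F_λ between the quadratic upper bound
   y ↦ F p + c |p - y|² and the lower bound given by the subgradient
   inequality, which agree up to c |y - (p + λg)|².  Conversely every x is of
   this form ([prox_exists]): a minimising sequence of Φ_x is Cauchy by
   convexity and the parallelogram identity, its limit p minimises Φ_x by
   lower semicontinuity, and first-order optimality gives λ⁻¹(x - p) ∈ ∂F(p).
   Finally (ns-PL) with parameter μ is equivalent to F p - F_* ≤ |g|²/(2μ)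
   for every subgradient g ∈ ∂F(p) ([ns_PL_subgradientE]).  Part (1) is then
   the envelope identity at p = prox x, because 1/(2μ) + λ/2 = (λμ+1)/(2μ);
   part (2) is (PL) at the point p + λg, which even yields (ns-PL) with
   parameter μ, a fortiori with μ/4. *)

(* If t X + t² Y ≥ 0 for every step t ∈ (0, 1], then X ≥ 0: the linear term
   dominates for small t.  This is first-order optimality along a segment. *)
Lemma ge0_of_small_steps (R : realFieldType) (X Y : R) : 0 <= Y ->
  (forall t, 0 < t -> t <= 1 -> 0 <= t * X + t ^+ 2 * Y) -> 0 <= X.
Proof.
move=> Y0 small; rewrite leNgt; apply/negP => X0.
have YX : 0 < Y - X by lra.
set t := - X / (Y - X).
have t0 : 0 < t by rewrite /t divr_gt0 // oppr_gt0.
have t1 : t <= 1 by rewrite /t ler_pdivrMr // mul1r; lra.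
have tYX : t * (Y - X) = - X by rewrite /t divfK // lt0r_neq0.
have := small t t0 t1.
have -> : t * X + t ^+ 2 * Y = t * (t * X) by rewrite expr2; nra.
by rewrite leNgt !pmulr_rlt0 // X0.
Qed.

Lemma inv_succ_lt_eventually (R : realType) (d : R) : 0 < d ->
  \forall n \near \oo, (n.+1%:R^-1 : R) < d.
Proof. by move=> d0; exact: (near_infty_natSinv_lt (PosNum d0)). Qed.

Section InnerProduct.
Variables (R : realType) (H : completeNormedModType R) (ip : H -> H -> R).
Hypothesis hip : is_inner_product ip.

Lemma ip0l y : ip 0 y = 0.
Proof. have := ip_linear hip 1 0 0 y; rewrite scale1r addr0 mul1r; lra. Qed.

Lemma ipDl x y z : ip (x + y) z = ip x z + ip y z.
Proof. by have := ip_linear hip 1 x y z; rewrite scale1r mul1r. Qed.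

Lemma ipZl a x z : ip (a *: x) z = a * ip x z.
Proof. by have := ip_linear hip a x 0 z; rewrite addr0 ip0l addr0. Qed.

Lemma ipNl x z : ip (- x) z = - ip x z.
Proof. by rewrite -scaleN1r ipZl mulN1r. Qed.

Lemma ipBl x y z : ip (x - y) z = ip x z - ip y z.
Proof. by rewrite ipDl ipNl. Qed.

Lemma ipDr x y z : ip z (x + y) = ip z x + ip z y.
Proof. by rewrite !(ip_sym hip z) ipDl. Qed.

Lemma ipZr a x z : ip z (a *: x) = a * ip z x.
Proof. by rewrite !(ip_sym hip z) ipZl. Qed.

Lemma ipBr x y z : ip z (x - y) = ip z x - ip z y.
Proof. by rewrite !(ip_sym hip z) ipBl. Qed.

Lemma sqr_normD x y : `|x + y| ^+ 2 = `|x| ^+ 2 + 2 * ip x y + `|y| ^+ 2.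
Proof. rewrite -!(ip_norm hip) ipDl !ipDr (ip_sym hip y x); lra. Qed.

Lemma sqr_normB x y : `|x - y| ^+ 2 = `|x| ^+ 2 - 2 * ip x y + `|y| ^+ 2.
Proof. rewrite -!(ip_norm hip) ipBl !ipBr (ip_sym hip y x); lra. Qed.

Lemma sqr_normZ (a : R) (x : H) : `|a *: x| ^+ 2 = a ^+ 2 * `|x| ^+ 2.
Proof. by rewrite normrZ exprMn real_normK // num_real. Qed.

Definition ip_functional (g : H) : H -> R^o := fun h => ip g h.

Lemma ip_functional_linear g : linear (ip_functional g).
Proof. by move=> a u v; rewrite /ip_functional ipDr ipZr. Qed.

HB.instance Definition _ g := GRing.isLinear.Build R H R^o *:%R
  (ip_functional g) (ip_functional_linear g).

(* Cauchy–Schwarz in the weak form |<g,h>| ≤ (|g|² + |h|²)/2 gives boundedness. *)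
Lemma ip_functional_continuous g : continuous (ip_functional g).
Proof.
apply: bounded_linear_continuous; apply/bounded_funP => r.
exists ((`|g| ^+ 2 + r ^+ 2) / 2) => h hr.
have hD := sqr_normD g h; have hB := sqr_normB g h.
have := normr_ge0 (g + h); have := normr_ge0 (g - h); have := normr_ge0 h.
move=> ? ? ?; change (`|ip g h| <= (`|g| ^+ 2 + r ^+ 2) / 2).
by rewrite ler_norml; apply/andP; split; nra.
Qed.

Lemma gradient_of_quadratic_error (G : H -> R^o) x g c : 0 <= c ->
  (forall h, `|G (h + x) - G x - ip g h| <= c * `|h| ^+ 2) ->
  is_gradient ip G x g.
Proof.
move=> c0 err.
have expansion : G \o shift x = cst (G x) + ip_functional g +o_ 0 id.
  apply/eqaddoP => eps eps0.
  have e0 : 0 < eps / (c + 1) by rewrite divr_gt0 // ltr_wpDl.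
  near=> h.
  have hs : `|h| < eps / (c + 1) by near: h; exact: nbhs0_lt.
  rewrite /= opprD addrA; apply: (le_trans (err h)).
  have := normr_ge0 h.
  rewrite ltr_pdivlMr ?ltr_wpDl // in hs.
  by rewrite expr2 mulrA ler_wpM2r //; nra.
have dG : 'd G x = ip_functional g :> (H -> R^o).
  exact: diff_unique (@ip_functional_continuous g) expansion.
split; last by move=> h; rewrite dG.
by apply/diff_locallyP; rewrite dG; split => //; exact: ip_functional_continuous.
Unshelve. all: by end_near. Qed.

Lemma gradient_unique (G : H -> R^o) x g1 g2 :
  is_gradient ip G x g1 -> is_gradient ip G x g2 -> g1 = g2.
Proof.
move=> [_ dg1] [_ dg2].
have : ip (g1 - g2) (g1 - g2) = 0 by rewrite ipBl -dg1 -dg2 subrr.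
by rewrite (ip_norm hip) => /eqP; rewrite expf_eq0 /= normr_eq0 subr_eq0 => /eqP.
Qed.

End InnerProduct.

Lemma dist0_ge0 (R : realType) (H : completeNormedModType R) (A : set H) :
  (0 <= dist0 A)%E.
Proof. by apply: le_ereal_inf_tmp => _ [g _ <-]; rewrite lee_fin. Qed.

Lemma sqr_dist0_le (R : realType) (H : completeNormedModType R) (A : set H) g :
  A g -> (dist0 A * dist0 A <= (`|g| ^+ 2)%:E)%E.
Proof.
move=> Ag; have dg : (dist0 A <= (`|g|)%:E)%E by apply: ereal_inf_lbound; exists g.
by rewrite expr2 EFinM; apply: lee_pmul => //; exact: dist0_ge0.
Qed.

Lemma sqr_dist0_ge (R : realType) (H : completeNormedModType R) (A : set H) (a : R) :
  0 <= a -> (forall g, A g -> a <= `|g| ^+ 2) -> (a%:E <= dist0 A * dist0 A)%E.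
Proof.
move=> a0 lb; set s := Num.sqrt a.
have s0 : 0 <= s := sqrtr_ge0 _.
have sd : (s%:E <= dist0 A)%E.
  apply: le_ereal_inf_tmp => _ [g Ag <-]; rewrite lee_fin.
  by rewrite -(ler_pXn2r (n := 2)) ?nnegrE // sqr_sqrtr // lb.
by rewrite -(sqr_sqrtr a0) -/s expr2 EFinM; apply: lee_pmul.
Qed.

Section MoreauEnvelope.
Variables (R : realType) (H : completeNormedModType R) (ip : H -> H -> R).
Hypothesis hip : is_inner_product ip.
Variables (F : H -> \bar R) (lambda : R).
Hypothesis lambda_gt0 : 0 < lambda.
Hypothesis F_proper : proper_fun F.
Variable xs : H.
Hypothesis xs_min : forall y, (F xs <= F y)%E.

Let c := (2 * lambda)^-1.
Let c_gt0 : 0 < c. Proof. by rewrite /c invr_gt0 mulr_gt0. Qed.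

Definition moreau_obj x y := (F y + (c * `|y - x| ^+ 2)%:E)%E.

Definition Fstar := fine (einf_fun F).

Lemma F_neqNy y : F y != -oo%E.
Proof. by rewrite gt_eqF // F_proper.1. Qed.

Lemma einf_minimizer : einf_fun F = F xs.
Proof.
apply/eqP; rewrite eq_le; apply/andP; split; last first.
  by apply: le_ereal_inf_tmp => _ [y _ <-]; exact: xs_min.
by apply: ereal_inf_lbound; exists xs.
Qed.

Lemma F_minimizer : F xs = Fstar%:E.
Proof.
rewrite /Fstar einf_minimizer fineK // fin_numE F_neqNy /=.
have [x0 Fx0] := F_proper.2; by rewrite lt_eqF // (le_lt_trans (xs_min x0)).
Qed.

Lemma einf_Fstar : einf_fun F = Fstar%:E.
Proof. by rewrite einf_minimizer F_minimizer. Qed.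

Lemma Fstar_le_obj x y : (Fstar%:E <= moreau_obj x y)%E.
Proof.
rewrite /moreau_obj -F_minimizer; apply: lee_paddr; last exact: xs_min.
by rewrite lee_fin mulr_ge0 // ?ltW // exprn_ge0.
Qed.

(* The infimum defining F_λ x is finite, so [moreau] is its exact value. *)
Lemma moreauE x :
  (moreau F lambda x)%:E = ereal_inf [set moreau_obj x y | y in [set: H]].
Proof.
have lb : (Fstar%:E <= ereal_inf [set moreau_obj x y | y in [set: H]])%E.
  by apply: le_ereal_inf_tmp => _ [y _ <-]; exact: Fstar_le_obj.
have ub : (ereal_inf [set moreau_obj x y | y in [set: H]] <= moreau_obj x xs)%E.
  by apply: ereal_inf_lbound; exists xs.
rewrite /moreau fineK // fin_numE gt_eqF ?(lt_le_trans (ltNyr _) lb) //=.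
by rewrite lt_eqF // (le_lt_trans ub) // /moreau_obj F_minimizer -EFinD ltry.
Qed.

Lemma moreau_le_obj x y : ((moreau F lambda x)%:E <= moreau_obj x y)%E.
Proof. by rewrite moreauE; apply: ereal_inf_lbound; exists y. Qed.

Lemma moreau_le x y fy : F y = fy%:E ->
  moreau F lambda x <= fy + c * `|y - x| ^+ 2.
Proof. by move=> Fy; have := moreau_le_obj x y; rewrite /moreau_obj Fy -EFinD lee_fin. Qed.

Lemma moreau_ge x r : (forall y, (r%:E <= moreau_obj x y)%E) -> r <= moreau F lambda x.
Proof.
move=> lb; rewrite -lee_fin moreauE; apply: le_ereal_inf_tmp.
by move=> _ [y _ <-]; exact: lb.
Qed.

Lemma Fstar_le_moreau x : Fstar <= moreau F lambda x.
Proof. by apply: moreau_ge => y; exact: Fstar_le_obj. Qed.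

Lemma moreau_minimizer : moreau F lambda xs <= Fstar.
Proof.
have := moreau_le xs F_minimizer.
by rewrite subrr normr0 expr0n mulr0 addr0.
Qed.

Definition subgradient_at p fp g := F p = fp%:E /\
  forall z, (F p + (ip g (z - p))%:E <= F z)%E.

Lemma subgradient_at_subdiff p fp g : subgradient_at p fp g -> subdiff ip F p g.
Proof. by move=> [Fp sub]; split => //; rewrite Fp ltry. Qed.

Lemma subdiff_subgradient_at p g :
  subdiff ip F p g -> exists fp, subgradient_at p fp g.
Proof.
move=> [Fp_lt sub].
have [fp Fp] : exists fp, F p = fp%:E.
  by move: Fp_lt (F_neqNy p); case: (F p) => [fp| |] // _ _; exists fp.
by exists fp.
Qed.

(* Lower bound on F_λ from a subgradient: minimise the affine minorant
   fp + <g, z - p> plus c |z - y|² over z. *)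
Lemma moreau_ge_subgradient p fp g : subgradient_at p fp g ->
  forall y, fp + ip g (y - p) - lambda / 2 * `|g| ^+ 2 <= moreau F lambda y.
Proof.
move=> [Fp sub] y; apply: moreau_ge => z; rewrite /moreau_obj.
move: (sub z) (F_neqNy z); rewrite Fp; case: (F z) => [fz| |] // subz _; last first.
  by rewrite addye // leey.
move: subz; rewrite -EFinD !lee_fin => subz.
have sqr_ge0 : 0 <= c * `|z - y + lambda *: g| ^+ 2 by rewrite mulr_ge0 ?exprn_ge0 // ltW.
rewrite (sqr_normD hip) sqr_normZ (ipZr hip) in sqr_ge0.
have split_ip : ip g (z - p) = ip g (y - p) + ip (z - y) g.
  by rewrite !(ipBr hip) (ip_sym hip (z - y)) (ipBr hip); lra.
have expand : c * (`|z - y| ^+ 2 + 2 * (lambda * ip (z - y) g) + lambda ^+ 2 * `|g| ^+ 2)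
    = ip (z - y) g + lambda / 2 * `|g| ^+ 2 + c * `|z - y| ^+ 2.
  by rewrite /c; field; exact: lt0r_neq0.
lra.
Qed.

Lemma envelope_at_subgradient p fp g : subgradient_at p fp g ->
  moreau F lambda (p + lambda *: g) = fp + lambda / 2 * `|g| ^+ 2 /\
  is_gradient ip (moreau F lambda) (p + lambda *: g) g.
Proof.
move=> sub; set x := p + lambda *: g.
have up y : moreau F lambda y <= fp + c * `|p - y| ^+ 2 := moreau_le y sub.1.
have lo := moreau_ge_subgradient sub.
have half : c * (lambda ^+ 2 * `|g| ^+ 2) = lambda / 2 * `|g| ^+ 2.
  by rewrite /c; field; exact: lt0r_neq0.
have Mx : moreau F lambda x = fp + lambda / 2 * `|g| ^+ 2.
  apply/eqP; rewrite eq_le; apply/andP; split.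
    by have := up x; rewrite /x opprD addrA subrr add0r normrN sqr_normZ; lra.
  by have := lo x; rewrite /x [p + _]addrC addrK (ipZr hip) (ip_norm hip); lra.
split => //; apply: (gradient_of_quadratic_error hip (c := c)); first exact: ltW.
move=> h.
have shift_x : h + x - p = h + lambda *: g by rewrite /x [p + _]addrC addrA addrK.
have u := up (h + x); rewrite -normrN opprB shift_x (sqr_normD hip) sqr_normZ in u.
rewrite (ipZr hip) in u.
have l := lo (h + x); rewrite shift_x (ipDr hip) (ipZr hip) (ip_norm hip) in l.
have lin : c * (2 * (lambda * ip h g)) = ip g h.
  by rewrite (ip_sym hip) /c; field; exact: lt0r_neq0.
have quad : 0 <= c * `|h| ^+ 2 by rewrite mulr_ge0 ?exprn_ge0 // ltW.
by rewrite Mx ler_norml; apply/andP; split; lra.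
Qed.

(* If (PL) holds for F_λ with parameter μ, every subgradient g ∈ ∂F(p)
   satisfies F p - F_* ≤ |g|²/(2μ): apply (PL) at p + λg. *)
Lemma subgradient_bound_of_envelope_PL (mu : R) : PL ip (moreau F lambda) mu ->
  forall p fp g, subgradient_at p fp g -> fp - Fstar <= (2 * mu)^-1 * `|g| ^+ 2.
Proof.
move=> [_ [xm [xm_min PLineq]]] p fp g sub.
have [Mx grad] := envelope_at_subgradient sub.
have := PLineq _ _ grad; rewrite Mx => PLx.
have := xm_min xs; have := moreau_minimizer.
have : 0 <= lambda / 2 * `|g| ^+ 2 by rewrite mulr_ge0 ?exprn_ge0 // divr_ge0 // ltW.
lra.
Qed.

Lemma ns_PL_subgradientE (mu : R) : 0 < mu ->
  ns_PL ip F mu <->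
  forall p fp g, subgradient_at p fp g -> fp - Fstar <= (2 * mu)^-1 * `|g| ^+ 2.
Proof.
move=> mu0; have k0 : (0 <= (2 * mu)^-1)%R by rewrite invr_ge0 mulr_ge0 // ltW.
split.
  move=> nsPL p fp g sub; rewrite -lee_fin EFinM EFinB -sub.1 -einf_Fstar.
  apply: le_trans (nsPL p) _; apply: lee_wpmul2l; first by rewrite lee_fin.
  exact: sqr_dist0_le (subgradient_at_subdiff sub).
move=> bound x; rewrite einf_Fstar.
case Fx : (F x) (F_neqNy x) => [fx| |] // _; last first.
  have -> : subdiff ip F x = set0.
    by apply/seteqP; split => // g [+ _]; rewrite Fx.
  rewrite /dist0 image_set0 ereal_inf0 mulyy muleC gt0_mulye ?leey //.
  by rewrite lte_fin invr_gt0 mulr_gt0.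
have gap0 : 0 <= fx - Fstar.
  by rewrite subr_ge0 -lee_fin -Fx -F_minimizer; exact: xs_min.
have gap : ((fx - Fstar)%:E = (2 * mu)^-1%:E * (2 * mu * (fx - Fstar))%:E)%E.
  by rewrite -EFinM; congr EFin; field; exact: lt0r_neq0.
rewrite -EFinB gap; apply: lee_wpmul2l; first by rewrite lee_fin.
apply: sqr_dist0_ge => [|g /subdiff_subgradient_at [fx' sub]].
  by rewrite !mulr_ge0 // ltW.
have := bound _ _ _ sub; move: sub.1; rewrite Fx => -[<-] b.
have mu2 : 0 < 2 * mu by rewrite mulr_gt0.
by rewrite -(ler_pM2l mu2) mulrA mulfV ?gt_eqF // mul1r in b.
Qed.

Hypothesis F_convex : convex_efun F.
Hypothesis F_lsc : lower_semicontinuous F.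

(* Φ_x is uniformly convex: the midpoint of a and b bounds their distance. *)
Lemma midpoint_bound x a b fa fb : F a = fa%:E -> F b = fb%:E ->
  c * `|a - b| ^+ 2 <= 2 * (fa + c * `|a - x| ^+ 2 + fb + c * `|b - x| ^+ 2
                            - 2 * moreau F lambda x).
Proof.
move=> Fa Fb.
have half : (1 - 2^-1 = 2^-1 :> R) by field.
set z := 2^-1 *: a + (1 - 2^-1) *: b.
have Fz_le := F_convex a b (t := 2^-1).
rewrite Fa Fb -!EFinM -EFinD in Fz_le.
have {}Fz_le := Fz_le (ltac:(apply/andP; split; lra)).
have Mz := moreau_le_obj x z; rewrite /moreau_obj in Mz.
move: Fz_le Mz (F_neqNy z); rewrite -/z; case: (F z) => [fz| |] Fz_le Mz Fz_ninf; last by [].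
  2: by move: Fz_le; rewrite leNgt ltey.
rewrite -EFinD !lee_fin half in Fz_le Mz.
have zx : z - x = 2^-1 *: (a - x) + 2^-1 *: (b - x).
  rewrite /z half !scalerBr addrACA -opprD -scalerDl.
  by rewrite (_ : 2^-1 + 2^-1 = 1 :> R) ?scale1r //; field.
have ab : a - b = (a - x) - (b - x) by rewrite opprB addrA subrK.
rewrite zx (sqr_normD hip) !sqr_normZ (ipZl hip) (ipZr hip) in Mz.
rewrite ab (sqr_normB hip).
set A := `|a - x| ^+ 2 in Mz *; set B := `|b - x| ^+ 2 in Mz *.
set I := ip (a - x) (b - x) in Mz *.
have quarter : c * ((2^-1) ^+ 2 * A + 2 * (2^-1 * (2^-1 * I)) + (2^-1) ^+ 2 * B) =
  4^-1 * (c * A) + 2^-1 * (c * I) + 4^-1 * (c * B) by field.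
have cAB : c * (A - 2 * I + B) = c * A - 2 * (c * I) + c * B by ring.
by rewrite cAB; lra.
Qed.

Lemma moreau_obj_ltE x y r : (moreau_obj x y < r%:E)%E ->
  exists fy, F y = fy%:E /\ fy + c * `|y - x| ^+ 2 < r.
Proof.
rewrite /moreau_obj; case: (F y) (F_neqNy y) => [fy| |] // _.
by rewrite -EFinD lte_fin => lt; exists fy.
Qed.

Definition minimizing_seq x (u : nat -> H) :=
  forall n, (moreau_obj x (u n) < (moreau F lambda x + n.+1%:R^-1)%:E)%E.

Lemma minimizing_seq_exists x : exists u, minimizing_seq x u.
Proof.
have approx (n : nat) :
    exists y, (moreau_obj x y < (moreau F lambda x + n.+1%:R^-1)%:E)%E.
  have : (ereal_inf [set moreau_obj x y | y in [set: H]] <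
          (moreau F lambda x + n.+1%:R^-1)%:E)%E.
    by rewrite -moreauE lte_fin ltrDl invr_gt0 ltr0n.
  by move/ereal_inf_lt => [_ [y _ <-] lt]; exists y.
by have [u min_u] := choice approx; exists u.
Qed.

(* By [midpoint_bound], c |u n - u k|² ≤ 2 (1/(n+1) + 1/(k+1)). *)
Lemma minimizing_seq_cauchy x u : minimizing_seq x u -> cauchy (u @ \oo).
Proof.
move=> min_u; apply/cauchy_ballP => e e0; near_simpl.
have d0 : 0 < c * e ^+ 2 / 4 by rewrite divr_gt0 // mulr_gt0 // exprn_gt0.
near=> n k => /=.
have [fn [Fn ltn]] := moreau_obj_ltE (min_u n).
have [fk [Fk ltk]] := moreau_obj_ltE (min_u k).
have mid := midpoint_bound x Fn Fk.
have tn : n.+1%:R^-1 < c * e ^+ 2 / 4 by near: n; exact: inv_succ_lt_eventually.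
have tk : k.+1%:R^-1 < c * e ^+ 2 / 4 by near: k; exact: inv_succ_lt_eventually.
rewrite -ball_normE /ball_ /=.
set an := (n.+1%:R^-1 : R) in ltn tn; set ak := (k.+1%:R^-1 : R) in ltk tk.
have : c * `|u n - u k| ^+ 2 < c * e ^+ 2 by lra.
by rewrite ltr_pM2l //; have := normr_ge0 (u n - u k); nra.
Unshelve. all: by end_near. Qed.

(* By lower semicontinuity, the limit of a minimising sequence attains F_λ x. *)
Lemma minimizing_seq_limit x u p : minimizing_seq x u -> u @ \oo --> p ->
  moreau_obj x p = (moreau F lambda x)%:E.
Proof.
move=> min_u up; apply/eqP; rewrite eq_le moreau_le_obj andbT.
rewrite leNgt; apply/negP; rewrite /moreau_obj.
set m := moreau F lambda x; set r := c * `|p - x| ^+ 2 => lt_obj.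
have [e e0 Fp_gt] : exists2 e, 0 < e & ((m - r + e)%:E < F p)%E.
  move: lt_obj; case: (F p) (F_neqNy p) => [fp| |] // _ lt.
    exists ((fp + r - m) / 2); rewrite -EFinD lte_fin in lt; first lra.
    by rewrite lte_fin; lra.
  by exists 1 => //; exact: ltry.
have [V Vnbhs VF] := F_lsc Fp_gt.
have dist_cvg : (fun n => c * `|u n - x| ^+ 2) @ \oo --> r.
  apply: cvgMl_tmp; rewrite expr2.
  under eq_fun do rewrite expr2.
  by apply: cvgM; apply: cvg_norm; apply: cvgB => //; exact: cvg_cst.
have ev_dist := @cvgr_gt R _ _ _ _ _ dist_cvg (r - e / 2) ltac:(lra).
near \oo => n.
have [fn [Fn ltn]] := moreau_obj_ltE (min_u n); rewrite -/m in ltn.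
have Vn : V (u n) by near: n; exact: up V Vnbhs.
have dn : r - e / 2 < c * `|u n - x| ^+ 2 by near: n.
have tn : (n.+1%:R^-1 : R) < e / 2.
  by near: n; apply: inv_succ_lt_eventually; lra.
have := VF _ Vn; rewrite Fn lte_fin => Fn_gt.
set an := (n.+1%:R^-1 : R) in ltn tn.
have : an < an by move: dn Fn_gt ltn tn; clear -e0; lra.
by rewrite ltxx.
Unshelve. all: by end_near. Qed.

(* First-order optimality: a minimiser p of Φ_x satisfies λ⁻¹(x - p) ∈ ∂F(p).
   Compare Φ_x(p) with Φ_x on the segment from p towards z, using convexity. *)
Lemma minimizer_subgradient x p fp : F p = fp%:E ->
  fp + c * `|p - x| ^+ 2 = moreau F lambda x ->
  subgradient_at p fp (lambda^-1 *: (x - p)).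
Proof.
move=> Fp opt; split => // z.
rewrite Fp; case Fz : (F z) (F_neqNy z) => [fz| |] // _; last by rewrite leey.
rewrite -EFinD lee_fin.
set J := ip (p - x) (z - p).
have grad_ip : ip (lambda^-1 *: (x - p)) (z - p) = - (2 * c * J).
  rewrite (ipZl hip) -opprB (ipNl hip) /J (_ : lambda^-1 = 2 * c); first ring.
  by rewrite /c; field; exact: lt0r_neq0.
rewrite grad_ip.
suff : 0 <= fz - fp + 2 * c * J by lra.
apply: (@ge0_of_small_steps _ _ (c * `|z - p| ^+ 2)).
  by rewrite mulr_ge0 ?exprn_ge0 // ltW.
move=> t t0 t1; set zt := t *: z + (1 - t) *: p.
have Fzt_le := F_convex z p (ltac:(apply/andP; split => //; exact: ltW) : 0 <= t <= 1).
rewrite Fp Fz -!EFinM -EFinD in Fzt_le.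
have Mzt := moreau_le_obj x zt; rewrite /moreau_obj in Mzt.
move: Fzt_le Mzt (F_neqNy zt); rewrite -/zt; case: (F zt) => [fzt| |] Fzt_le Mzt Fzt_ninf; last by [].
  2: by move: Fzt_le; rewrite leNgt ltey.
rewrite -EFinD !lee_fin in Fzt_le Mzt.
have ztx : zt - x = (p - x) + t *: (z - p).
  by rewrite /zt scalerBl scale1r scalerBr addrCA addrAC.
rewrite ztx (sqr_normD hip) sqr_normZ (ipZr hip) -/J -opt in Mzt.
lra.
Qed.

Lemma prox_exists x : exists p fp, subgradient_at p fp (lambda^-1 *: (x - p)).
Proof.
have [u min_u] := minimizing_seq_exists x.
have u_cvg : cvg (u @ \oo) by apply/cauchy_cvgP; exact: minimizing_seq_cauchy min_u.
have := minimizing_seq_limit min_u u_cvg; set p := lim _.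
rewrite /moreau_obj; case Fp : (F p) (F_neqNy p) => [fp| |] // _.
rewrite -EFinD => -[opt]; exists p, fp.
exact: minimizer_subgradient Fp opt.
Qed.

Lemma prox_decomposition (x p : H) : p + lambda *: (lambda^-1 *: (x - p)) = x.
Proof. by rewrite scalerA mulfV ?lt0r_neq0 // scale1r subrKC. Qed.

(* Part (1): the subgradient bound with parameter μ gives (PL) for F_λ with
   parameter μ/(λμ+1), through the envelope identity at the proximal point. *)
Lemma envelope_PL_of_subgradient_bound (mu : R) : 0 < mu ->
  (forall p fp g, subgradient_at p fp g -> fp - Fstar <= (2 * mu)^-1 * `|g| ^+ 2) ->
  PL ip (moreau F lambda) (mu / (lambda * mu + 1)).
Proof.
move=> mu0 bound; split.
  move=> x; have [p [fp sub]] := prox_exists x.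
  have [_ grad] := envelope_at_subgradient sub.
  by rewrite prox_decomposition in grad; eexists; exact: grad.
exists xs; split.
  by move=> y; apply: le_trans moreau_minimizer _; exact: Fstar_le_moreau.
move=> x g' grad'.
have [p [fp sub]] := prox_exists x.
have [Mx grad] := envelope_at_subgradient sub.
rewrite prox_decomposition in Mx grad.
rewrite (gradient_unique hip grad' grad) Mx.
have := bound _ _ _ sub; have := Fstar_le_moreau xs.
have -> : (2 * (mu / (lambda * mu + 1)))^-1 = (2 * mu)^-1 + lambda / 2.
  field; apply/andP; split; first exact: lt0r_neq0.
  by apply: lt0r_neq0; rewrite ltr_wpDl // mulr_ge0 // ltW.
by rewrite mulrDl; lra.
Qed.

End MoreauEnvelope.

Theorem proposition4p1 (R : realType) (H : completeNormedModType R)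
    (ip : H -> H -> R) (F : H -> \bar R) (lambda : R) :
  is_inner_product ip -> 0 < lambda ->
  convex_efun F -> proper_fun F -> lower_semicontinuous F -> has_minimizer F ->
  (forall mu : R, 0 < mu -> ns_PL ip F mu ->
     PL ip (moreau F lambda) (mu / (lambda * mu + 1))) /\
  (forall mu : R, 0 < mu -> PL ip (moreau F lambda) mu ->
     ns_PL ip F (mu / 4)).
Proof.
move=> hip lambda0 Fconv Fprop Flsc [xs xs_min]; split=> mu mu0.
  move=> /(ns_PL_subgradientE ip Fprop xs_min mu0) bound.
  exact: envelope_PL_of_subgradient_bound.
move=> /(subgradient_bound_of_envelope_PL hip lambda0 Fprop xs_min) bound.
have mu4 : 0 < mu / 4 by rewrite divr_gt0.
apply/(ns_PL_subgradientE ip Fprop xs_min mu4) => p fp g sub.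
apply: le_trans (bound _ _ _ sub) _; rewrite ler_wpM2r ?exprn_ge0 //.
by rewrite lef_pV2 ?posrE ?mulr_gt0 // ler_pM2l // ler_pdivrMr //; lra.
Qed.
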